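(* Let $n=p+q\geq 3$, let $\mathfrak g=\mathfrak{so}(p+1,q+1)$ with the $|1|$-grading described below, and let $Z\in\mathfrak g_1$ satisfy $\langle Z,Z\rangle\neq 0$. Then: (1) $0=C(Z)\subset F(Z)=\{X\in\mathfrak g_{-1}: ZX=\langle X,X\rangle=0\}$ and $T(Z)=\left\{\frac{2}{\langle Z,Z\rangle}\mathbb I Z^t\right\}$. (2) For the unique element $X\in T(Z)$, the bracket $A=[Z,X]\in\mathfrak g_0$ is twice the grading element of $\mathfrak g$. In particular, $A$ acts diagonalizably on $\mathfrak g_{-1}$ and on each $\mathbb W$ in the list below, all eigenvalues of $A$ on $\mathfrak g_{-1}$ are non-positive with $0$-eigenspace equal to $C(Z)$, $\mathbb W_{ss}(A)=0$, and $\bigcap_{X\in T(Z)}\mathbb W_{st}(A)=0$ for each such $\mathbb W$.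
   Context: Let $\mathbb I=\mathrm{Id}_p\oplus(-\mathrm{Id}_q)$. Realize $\mathfrak g=\mathfrak{so}(p+1,q+1)$ as the matrices $\begin{pmatrix} a & Z & 0\\ X & A & -\mathbb I Z^t\\ 0 & -X^t\mathbb I & -a\end{pmatrix}$ with $a\in\mathbb R$, $X\in\mathbb R^n$ (column), $Z\in\mathbb R^{n*}$ (row), $A\in\mathfrak{so}(p,q)$; bracket is the matrix commutator. The components $\mathfrak g_{-1},\mathfrak g_0,\mathfrak g_1$ are given by $X$, $(A,a)$ and $Z$ respectively. $ZX$ is the real number given by the matrix product; $\langle X,Y\rangle=X^t\mathbb IY$ on $\mathfrak g_{-1}$ and $\langle Z,W\rangle=Z\mathbb IW^t$ on $\mathfrak g_1$. The grading element is the unique $E\in\mathfrak g$ with $\mathrm{ad}(E)=i$ on $\mathfrak g_i$, $i=-1,0,1$. For $Z\in\mathfrak g_1$: $C(Z)=\{X\in\mathfrak g_{-1}:[X,Z]=0\}$, $F(Z)=\{X\in\mathfrak g_{-1}:[X,[X,Z]]=0\}$, $T(Z)=\{X\in\mathfrak g_{-1}:[[Z,X],X]=-2X,\ [[Z,X],Z]=2Z\}$. The representations $\mathbb W$ of $\mathfrak g_0\cong\mathfrak{co}(p,q)$ carrying harmonic curvature: for $n\geq5$, the irreducible component of highest weight in $\Lambda^2\mathfrak g_1\otimes\mathfrak{so}(\mathfrak g_{-1})$ (Weyl tensors); for $n=3$, the irreducible component of highest weight in $\Lambda^2\mathfrak g_1\otimes\mathfrak g_1$ (Cotton–York tensors);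 for $n=4$, the two components of the Weyl-tensor space corresponding to the self-dual and anti-self-dual parts of $\Lambda^2\mathfrak g_1$. For $A$ acting diagonalizably on $\mathbb W$, $\mathbb W_{ss}(A)$ (resp. $\mathbb W_{st}(A)$) is the sum of the eigenspaces with negative (resp. non-positive) eigenvalues. *)

From HB Require Import structures.
From mathcomp Require Import all_boot all_order all_algebra.
Import Order.TTheory GRing.Theory Num.Theory.
Local Open Scope ring_scope.

Section Defs.
Variable R : realFieldType.

Definition Ib (p q : nat) : 'M[R]_(p + q) := block_mx 1%:M 0 0 (- 1%:M).

Definition so_pq (p q : nat) (A : 'M[R]_(p + q)) : Prop :=
  A^T *m Ib p q + Ib p q *m A = 0.

(* the matrix  ( a  Z  0 ; X  A  -𝕀Z^t ; 0  -X^t𝕀  -a ) *)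
Definition gm (p q : nat) (a : R) (X : 'cV[R]_(p + q)) (Z : 'rV[R]_(p + q))
  (A : 'M[R]_(p + q)) : 'M[R]_(1 + (p + q) + 1) :=
  block_mx (block_mx a%:M Z X A)
           (col_mx 0 (- (Ib p q *m Z^T)))
           (row_mx 0 (- (X^T *m Ib p q)))
           (- a)%:M.

Definition in_g (p q : nat) (M : 'M[R]_(1 + (p + q) + 1)) : Prop :=
  exists a X Z A, so_pq p q A /\ M = gm p q a X Z A.

Definition gneg (p q : nat) (X : 'cV[R]_(p + q)) := gm p q 0 X 0 0.
Definition gpos (p q : nat) (Z : 'rV[R]_(p + q)) := gm p q 0 0 Z 0.
Definition gzero (p q : nat) (a : R) (A : 'M[R]_(p + q)) := gm p q a 0 0 A.

Definition br {m : nat} (M N : 'M[R]_m) : 'M[R]_m := M *m N - N *m M.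

Definition pairZX (p q : nat) (Z : 'rV[R]_(p + q)) (X : 'cV[R]_(p + q)) : R :=
  (Z *m X) 0 0.
Definition innerV (p q : nat) (X Y : 'cV[R]_(p + q)) : R :=
  (X^T *m Ib p q *m Y) 0 0.
Definition innerW (p q : nat) (Z W : 'rV[R]_(p + q)) : R :=
  (Z *m Ib p q *m W^T) 0 0.

Definition is_grading_element (p q : nat) (E : 'M[R]_(1 + (p + q) + 1)) : Prop :=
  [/\ in_g p q E,
      (forall X, br E (gneg p q X) = - gneg p q X),
      (forall a A, so_pq p q A -> br E (gzero p q a A) = 0) &
      (forall Z, br E (gpos p q Z) = gpos p q Z)].

Definition Cset (p q : nat) (Z : 'rV[R]_(p + q)) (X : 'cV[R]_(p + q)) : Prop :=
  br (gneg p q X) (gpos p q Z) = 0.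
Definition Fset (p q : nat) (Z : 'rV[R]_(p + q)) (X : 'cV[R]_(p + q)) : Prop :=
  br (gneg p q X) (br (gneg p q X) (gpos p q Z)) = 0.
Definition Tset (p q : nat) (Z : 'rV[R]_(p + q)) (X : 'cV[R]_(p + q)) : Prop :=
  br (br (gpos p q Z) (gneg p q X)) (gneg p q X) = - (2 *: gneg p q X) /\
  br (br (gpos p q Z) (gneg p q X)) (gpos p q Z) = 2 *: gpos p q Z.

Definition actV (p q : nat) (A : 'M[R]_(1 + (p + q) + 1)) (X : 'cV[R]_(p + q))
  : 'cV[R]_(p + q) := dlsubmx (ulsubmx (br A (gneg p q X))).
Definition actW (p q : nat) (A : 'M[R]_(1 + (p + q) + 1)) (Z : 'rV[R]_(p + q))
  : 'rV[R]_(p + q) := ursubmx (ulsubmx (br A (gpos p q Z))).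
Definition rhoV (p q : nat) (A : 'M[R]_(1 + (p + q) + 1)) : 'M[R]_(p + q) :=
  \matrix_(k, l) (actV p q A (delta_mx l 0)) k 0.
(* action on the dual basis e^i of g_1 : A.e^i = sum_k cW i k e^k *)
Definition cW (p q : nat) (A : 'M[R]_(1 + (p + q) + 1)) (i k : 'I_(p + q)) : R :=
  (actW p q A (delta_mx 0 i)) 0 k.

(* Λ²g_1 ⊗ so(g_{-1}) ⊂ g_1 ⊗ g_1 ⊗ gl(g_{-1}) : T = sum_{ij} e^i ⊗ e^j ⊗ t(i,j) *)
Definition tens4 (n : nat) := {ffun 'I_n * 'I_n -> 'M[R]_n}.
(* Λ²g_1 ⊗ g_1 ⊂ g_1^{⊗3} : T = sum_{ijk} t(i,j,k) e^i ⊗ e^j ⊗ e^k *)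
Definition tens3 (n : nat) := {ffun 'I_n * 'I_n * 'I_n -> R^o}.

Definition act4 (p q : nat) (A : 'M[R]_(1 + (p + q) + 1)) (t : tens4 (p + q))
  : tens4 (p + q) :=
  [ffun kl : 'I_(p + q) * 'I_(p + q) =>
     \sum_i cW p q A i kl.1 *: t (i, kl.2) + \sum_j cW p q A j kl.2 *: t (kl.1, j)
     + (rhoV p q A *m t kl - t kl *m rhoV p q A)].

Definition act3 (p q : nat) (A : 'M[R]_(1 + (p + q) + 1)) (t : tens3 (p + q))
  : tens3 (p + q) :=
  [ffun klm : 'I_(p + q) * 'I_(p + q) * 'I_(p + q) =>
     \sum_i cW p q A i klm.1.1 * t (i, klm.1.2, klm.2)
     + \sum_j cW p q A j klm.1.2 * t (klm.1.1, j, klm.2)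
     + \sum_r cW p q A r klm.2 * t (klm.1.1, klm.1.2, r)].

Definition weyl_tensor (p q : nat) (t : tens4 (p + q)) : Prop :=
  [/\ (forall i j, t (i, j) = - t (j, i)),
      (forall i j, so_pq p q (t (i, j))),
      (forall i j l k, t (i, j) k l + t (j, l) k i + t (l, i) k j = 0) &
      (forall j l, \sum_i t (i, j) i l = 0)].

Definition cy_tensor (p q : nat) (t : tens3 (p + q)) : Prop :=
  [/\ (forall i j k, t (i, j, k) = - t (j, i, k)),
      (forall i j k, t (i, j, k) + t (j, k, i) + t (k, i, j) = 0) &
      (forall j, \sum_i Ib p q i i * t (i, j, i) = 0)].

End Defs.

Section Lin.
Variables (R : realFieldType) (V : lmodType R).

Definition subspace (W : V -> Prop) : Prop :=
  [/\ W 0, (forall u v, W u -> W v -> W (u + v)) &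
      (forall (c : R) u, W u -> W (c *: u))].

Definition diagonalizable_on (W : V -> Prop) (f : V -> V) : Prop :=
  forall w, W w -> exists s : seq (R * V),
    (forall x, x \in s -> W x.2 /\ f x.2 = x.1 *: x.2) /\
    w = \sum_(x <- s) x.2.

Definition eigen_sum (P : R -> bool) (W : V -> Prop) (f : V -> V) (v : V) : Prop :=
  exists s : seq (R * V),
    (forall x, x \in s -> [/\ W x.2, f x.2 = x.1 *: x.2 & P x.1]) /\
    v = \sum_(x <- s) x.2.

Definition W_ss (W : V -> Prop) (f : V -> V) := eigen_sum (fun l => l < 0) W f.
Definition W_st (W : V -> Prop) (f : V -> V) := eigen_sum (fun l => l <= 0) W f.

End Lin.
Arguments subspace {R V}.
Arguments diagonalizable_on {R V}.
Arguments eigen_sum {R V}.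
Arguments W_ss {R V}.
Arguments W_st {R V}.

Definition harmonic_component (R : realFieldType) (V : lmodType R)
  (p q : nat) (act : 'M[R]_(1 + (p + q) + 1) -> V -> V) (H : V -> Prop)
  (W : V -> Prop) : Prop :=
  let inv (U : V -> Prop) := forall a A, so_pq R p q A -> forall w, U w -> U (act (gzero R p q a A) w) in
  [/\ subspace W, (forall w, W w -> H w), inv W,
      (exists w, W w /\ w <> 0) &
      (forall U, subspace U -> inv U -> (forall w, U w -> W w) ->
          (forall w, U w -> w = 0) \/ (forall w, W w -> U w))].
Arguments br {R m}.
Arguments harmonic_component {R V}.

(* Put s = ZX and W = X Z - IZ^t X^t I ([wedge_mx]).  The bracket [X, Z] is
   the element (-s, W) of g_0, and pairing the resulting vector identities
   with Z and X^t I computes C(Z), F(Z) and T(Z).  For the unique X in T(Z)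
   one gets s = 2 and W = 0, so [Z, X] is twice the grading element (1, 0).
   Hence A = [Z, X] acts on g_{-1} by -2 and on tensors by the sum of the
   weights of their g_1 factors: by 4 on Lambda^2 g_1 (x) so(g_{-1}) and by 6
   on Lambda^2 g_1 (x) g_1.  A positive scalar has no eigenvectors with
   non-positive eigenvalue, so W_ss and W_st vanish on every subspace,
   irreducible or not. *)
From HB Require Import structures.
From mathcomp Require Import all_boot all_order all_algebra.
From mathcomp Require Import ring.
Import Order.TTheory GRing.Theory Num.Theory.
Local Open Scope ring_scope.

Section Block3.
Variables (R : pzRingType) (n : nat).

Definition block3_mx (m00 : 'M[R]_1) (m01 : 'M[R]_(1, n)) (m02 : 'M[R]_1)
  (m10 : 'M[R]_(n, 1)) (m11 : 'M[R]_n) (m12 : 'M[R]_(n, 1))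
  (m20 : 'M[R]_1) (m21 : 'M[R]_(1, n)) (m22 : 'M[R]_1) : 'M[R]_(1 + n + 1) :=
  block_mx (block_mx m00 m01 m10 m11) (col_mx m02 m12) (row_mx m20 m21) m22.

Lemma mulmx_block3 a00 a01 a02 a10 a11 a12 a20 a21 a22
                   b00 b01 b02 b10 b11 b12 b20 b21 b22 :
  block3_mx a00 a01 a02 a10 a11 a12 a20 a21 a22 *m
  block3_mx b00 b01 b02 b10 b11 b12 b20 b21 b22 =
  block3_mx (a00 *m b00 + a01 *m b10 + a02 *m b20)
            (a00 *m b01 + a01 *m b11 + a02 *m b21)
            (a00 *m b02 + a01 *m b12 + a02 *m b22)
            (a10 *m b00 + a11 *m b10 + a12 *m b20)
            (a10 *m b01 + a11 *m b11 + a12 *m b21)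
            (a10 *m b02 + a11 *m b12 + a12 *m b22)
            (a20 *m b00 + a21 *m b10 + a22 *m b20)
            (a20 *m b01 + a21 *m b11 + a22 *m b21)
            (a20 *m b02 + a21 *m b12 + a22 *m b22).
Proof.
by rewrite /block3_mx !mulmx_block mul_col_row add_block_mx mul_block_col
  mul_col_mx add_col_mx mul_row_block mul_mx_row add_row_mx mul_row_col.
Qed.

Lemma add_block3_mx a00 a01 a02 a10 a11 a12 a20 a21 a22
                    b00 b01 b02 b10 b11 b12 b20 b21 b22 :
  block3_mx a00 a01 a02 a10 a11 a12 a20 a21 a22 +
  block3_mx b00 b01 b02 b10 b11 b12 b20 b21 b22 =
  block3_mx (a00 + b00) (a01 + b01) (a02 + b02) (a10 + b10) (a11 + b11)
            (a12 + b12) (a20 + b20) (a21 + b21) (a22 + b22).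
Proof. by rewrite /block3_mx !add_block_mx add_col_mx add_row_mx. Qed.

Lemma opp_block3_mx a00 a01 a02 a10 a11 a12 a20 a21 a22 :
  - block3_mx a00 a01 a02 a10 a11 a12 a20 a21 a22 =
  block3_mx (- a00) (- a01) (- a02) (- a10) (- a11) (- a12)
            (- a20) (- a21) (- a22).
Proof. by rewrite /block3_mx !opp_block_mx opp_col_mx opp_row_mx. Qed.

Lemma scale_block3_mx (c : R) a00 a01 a02 a10 a11 a12 a20 a21 a22 :
  c *: block3_mx a00 a01 a02 a10 a11 a12 a20 a21 a22 =
  block3_mx (c *: a00) (c *: a01) (c *: a02) (c *: a10) (c *: a11)
            (c *: a12) (c *: a20) (c *: a21) (c *: a22).
Proof. by rewrite /block3_mx !scale_block_mx scale_col_mx scale_row_mx. Qed.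

Lemma block3_mx0 : block3_mx 0 0 0 0 0 0 0 0 0 = 0.
Proof. by rewrite /block3_mx block_mx0 col_mx0 row_mx0 block_mx0. Qed.

Lemma eq_block3_mx a00 a01 a02 a10 a11 a12 a20 a21 a22
                   b00 b01 b02 b10 b11 b12 b20 b21 b22 :
  block3_mx a00 a01 a02 a10 a11 a12 a20 a21 a22 =
  block3_mx b00 b01 b02 b10 b11 b12 b20 b21 b22 ->
  [/\ a00 = b00, a01 = b01, a02 = b02, a10 = b10 &
      [/\ a11 = b11, a12 = b12, a20 = b20, a21 = b21 & a22 = b22]].
Proof.
move/eq_block_mx => [/eq_block_mx [-> -> -> ->] /eq_col_mx [-> ->]].
by move=> /eq_row_mx [-> ->] ->.
Qed.

End Block3.
Arguments block3_mx {R n}.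

Section Kronecker.
Variables (R : pzRingType) (n : nat).

Lemma sum_scale_delta (V : lmodType R) (f : 'I_n -> V) (a : R) k :
  \sum_i (a * (i == k)%:R) *: f i = a *: f k.
Proof.
rewrite (bigD1 k) //= eqxx mulr1 big1 ?addr0 // => i /negbTE ->.
by rewrite mulr0 scale0r.
Qed.

Lemma sum_mul_delta (f : 'I_n -> R) (a : R) k :
  \sum_i a * (i == k)%:R * f i = a * f k.
Proof.
rewrite (bigD1 k) //= eqxx mulr1 big1 ?addr0 // => i /negbTE ->.
by rewrite mulr0 mul0r.
Qed.

End Kronecker.

Section Eigen.
Variables (R : realFieldType) (V : lmodType R).

Lemma scalar_diagonalizable (W : V -> Prop) (f : V -> V) (c : R) :
  (forall v, f v = c *: v) -> diagonalizable_on W f.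
Proof.
move=> hf w Ww; exists [:: (c, w)]; split; last by rewrite big_seq1.
by move=> x; rewrite inE => /eqP -> /=; split.
Qed.

Lemma eigen_sum0 (P : pred R) (W : V -> Prop) (f : V -> V) :
  eigen_sum P W f 0.
Proof. by exists [::]; split => //; rewrite big_nil. Qed.

Lemma eigen_sum_scalar_eq0 (P : pred R) (W : V -> Prop) (f : V -> V) c w :
  ~~ P c -> (forall v, f v = c *: v) -> eigen_sum P W f w -> w = 0.
Proof.
move=> nPc hf [s [hs ->]]; rewrite big_seq big1 // => x xs.
have [_ + Px] := hs x xs; rewrite hf => /eqP.
rewrite -subr_eq0 -scalerBl scaler_eq0 subr_eq0 => /orP [/eqP ec | /eqP //].
by move: Px; rewrite -ec (negbTE nPc).
Qed.

End Eigen.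

Section Grading.
Variables (R : realFieldType) (p q : nat).
Local Notation n := (p + q)%N.
Local Notation I := (Ib R p q).

Lemma trmx_Ib : I^T = I.
Proof. by rewrite /Ib tr_block_mx !trmx0 trmx1 linearN /= trmx1. Qed.

Lemma mulmx_IbIb : I *m I = 1%:M.
Proof.
rewrite /Ib mulmx_block !mulmx0 !mul0mx !addr0 !add0r mulmx1 mulmxN mulmx1.
by rewrite opprK -scalar_mx_block.
Qed.

Lemma so_pq0 : so_pq R p q 0.
Proof. by rewrite /so_pq trmx0 mul0mx mulmx0 addr0. Qed.

Lemma so_pqN A : so_pq R p q A -> so_pq R p q (- A).
Proof.
by rewrite /so_pq linearN /= mulNmx mulmxN -opprD => ->; rewrite oppr0.
Qed.

Lemma so_pq_Ib A : so_pq R p q A -> I *m A = - (A^T *m I).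
Proof. by move=> hA; apply/eqP; rewrite -addr_eq0 addrC hA. Qed.

(* conjugating the defining relation of so(p,q) by I = I^-1 *)
Lemma so_pq_tr A : so_pq R p q A -> I *m A^T = - (A *m I).
Proof.
move=> hA; apply/eqP; rewrite -addr_eq0; apply/eqP.
have := congr1 (fun M => I *m M *m I) hA.
rewrite /= mulmx0 mul0mx mulmxDr mulmxDl -!mulmxA mulmx_IbIb mulmx1.
by rewrite !mulmxA mulmx_IbIb mul1mx.
Qed.

Lemma gm_block3 a X Z A :
  gm R p q a X Z A =
  block3_mx a%:M Z 0 X A (- (I *m Z^T)) 0 (- (X^T *m I)) (- a)%:M.
Proof. by []. Qed.

Lemma scale_gm c a X Z A :
  c *: gm R p q a X Z A = gm R p q (c * a) (c *: X) (c *: Z) (c *: A).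
Proof.
rewrite !gm_block3 scale_block3_mx !scaler0 !scalerN !scale_scalar_mx mulrN.
by rewrite !linearZ /= -scalemxAl (scalerN c (X^T *m I)).
Qed.

Lemma gneg_block3 X : gneg R p q X = block3_mx 0 0 0 X 0 0 0 (- (X^T *m I)) 0.
Proof. by rewrite /gneg gm_block3 trmx0 mulmx0 !oppr0 raddf0. Qed.

Lemma gpos_block3 Z : gpos R p q Z = block3_mx 0 Z 0 0 0 (- (I *m Z^T)) 0 0 0.
Proof. by rewrite /gpos gm_block3 trmx0 mul0mx !oppr0 raddf0. Qed.

Lemma gzero_block3 a A :
  gzero R p q a A = block3_mx a%:M 0 0 0 A 0 0 0 (- a)%:M.
Proof. by rewrite /gzero gm_block3 !trmx0 mul0mx mulmx0 !oppr0. Qed.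

Lemma gnegK X : dlsubmx (ulsubmx (gneg R p q X)) = X.
Proof. by rewrite /gneg /gm block_mxKul block_mxKdl. Qed.

Lemma gposK Z : ursubmx (ulsubmx (gpos R p q Z)) = Z.
Proof. by rewrite /gpos /gm block_mxKul block_mxKur. Qed.

Lemma gneg_inj : injective (gneg R p q).
Proof. by move=> X Y /(congr1 (dlsubmx \o ulsubmx)); rewrite /= !gnegK. Qed.

Lemma gpos_inj : injective (gpos R p q).
Proof. by move=> Z W /(congr1 (ursubmx \o ulsubmx)); rewrite /= !gposK. Qed.

Lemma scale_gneg c X : c *: gneg R p q X = gneg R p q (c *: X).
Proof. by rewrite /gneg scale_gm mulr0 !scaler0. Qed.

Lemma scale_gpos c Z : c *: gpos R p q Z = gpos R p q (c *: Z).
Proof. by rewrite /gpos scale_gm mulr0 !scaler0. Qed.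

Lemma scale_gzero c a A : c *: gzero R p q a A = gzero R p q (c * a) (c *: A).
Proof. by rewrite /gzero scale_gm !scaler0. Qed.

Lemma gneg0 : gneg R p q 0 = 0.
Proof. by rewrite -(scale0r (gneg R p q 0)) scale_gneg scale0r. Qed.

Lemma oppr_gneg X : - gneg R p q X = gneg R p q (- X).
Proof. by rewrite -scaleN1r scale_gneg scaleN1r. Qed.

Lemma brC m (A B : 'M[R]_m) : br A B = - br B A.
Proof. by rewrite /br opprB. Qed.

Lemma br0r m (A : 'M[R]_m) : br A 0 = 0.
Proof. by rewrite /br mulmx0 mul0mx subrr. Qed.

Lemma br0l m (A : 'M[R]_m) : br 0 A = 0.
Proof. by rewrite /br mulmx0 mul0mx subrr. Qed.

Definition wedge_mx (X : 'cV[R]_n) (Z : 'rV[R]_n) : 'M[R]_n :=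
  X *m Z - I *m Z^T *m (X^T *m I).

Lemma so_wedge_mx X Z : so_pq R p q (wedge_mx X Z).
Proof.
rewrite /so_pq /wedge_mx linearB /= !trmx_mul !trmxK trmx_Ib.
rewrite mulmxBl mulmxBr.
rewrite !mulmxA mulmx_IbIb mul1mx -!mulmxA mulmx_IbIb mulmx1.
by rewrite addrC subrKA subrr.
Qed.

Lemma pairZX_mx Z X : Z *m X = (pairZX R p q Z X)%:M.
Proof. exact: mx11_scalar. Qed.

Lemma pairZX_tr Z X : X^T *m I *m (I *m Z^T) = (pairZX R p q Z X)%:M.
Proof.
rewrite -mulmxA (mulmxA I) mulmx_IbIb mul1mx -trmx_mul pairZX_mx.
exact: tr_scalar_mx.
Qed.

Lemma innerW_mx Z : Z *m (I *m Z^T) = (innerW R p q Z Z)%:M.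
Proof. by rewrite mulmxA [LHS]mx11_scalar. Qed.

Lemma innerV_mx X : X^T *m I *m X = (innerV R p q X X)%:M.
Proof. exact: mx11_scalar. Qed.

Ltac block3_simpl :=
  rewrite ?(mul0mx, mulmx0, add0r, addr0, oppr0, subr0, sub0r, mulNmx,
            mulmxN, opprK, mul_mx_scalar, mul_scalar_mx, scaleNr, scalerN).

Lemma br_neg_pos X Z :
  br (gneg R p q X) (gpos R p q Z) =
  gzero R p q (- pairZX R p q Z X) (wedge_mx X Z).
Proof.
rewrite /br gneg_block3 gpos_block3 gzero_block3 !mulmx_block3.
rewrite opp_block3_mx add_block3_mx; block3_simpl.
by rewrite pairZX_tr (pairZX_mx Z X) raddfN.
Qed.

Lemma br_gzero_neg a A X : so_pq R p q A ->
  br (gzero R p q a A) (gneg R p q X) = gneg R p q (A *m X - a *: X).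
Proof.
move=> soA; rewrite /br gneg_block3 gzero_block3 !mulmx_block3.
rewrite opp_block3_mx add_block3_mx; block3_simpl.
rewrite gneg_block3; congr block3_mx.
rewrite !linearB /= linearZ /= trmx_mul mulmxBl -scalemxAl opprB addrC.
by rewrite -mulmxA so_pq_Ib // mulmxN mulmxA addrC.
Qed.

Lemma br_gzero_pos a A Z : so_pq R p q A ->
  br (gzero R p q a A) (gpos R p q Z) = gpos R p q (a *: Z - Z *m A).
Proof.
move=> soA; rewrite /br !gpos_block3 gzero_block3 !mulmx_block3.
rewrite opp_block3_mx add_block3_mx; block3_simpl.
congr block3_mx.
rewrite linearB /= [(a *: Z)^T]linearZ /= trmx_mul mulmxBr -scalemxAr.
by rewrite (mulmxA I A^T) so_pq_tr // mulNmx opprK -mulmxA opprD addrC.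
Qed.

Lemma br_gzero_scalar a b A : br (gzero R p q a 0) (gzero R p q b A) = 0.
Proof.
rewrite /br !gzero_block3 !mulmx_block3 opp_block3_mx add_block3_mx.
block3_simpl; rewrite !scale_scalar_mx !mulrN [b * a]mulrC.
by rewrite subrr addNr block3_mx0.
Qed.

Lemma br_pos_neg X Z :
  br (gpos R p q Z) (gneg R p q X) =
  gzero R p q (pairZX R p q Z X) (- wedge_mx X Z).
Proof.
by rewrite brC br_neg_pos -scaleN1r scale_gzero mulN1r opprK scaleN1r.
Qed.

Lemma wedge_mx_IZ X Z :
  wedge_mx X Z *m (I *m Z^T) =
  innerW R p q Z Z *: X - pairZX R p q Z X *: (I *m Z^T).
Proof.
rewrite /wedge_mx mulmxBl -(mulmxA X) innerW_mx mul_mx_scalar.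
by rewrite -(mulmxA (I *m Z^T)) pairZX_tr mul_mx_scalar.
Qed.

Lemma wedge_mx_X X Z :
  wedge_mx X Z *m X = pairZX R p q Z X *: X - innerV R p q X X *: (I *m Z^T).
Proof.
rewrite /wedge_mx mulmxBl -(mulmxA X) (pairZX_mx Z X) mul_mx_scalar.
by rewrite -(mulmxA (I *m Z^T)) innerV_mx mul_mx_scalar.
Qed.

Lemma Z_wedge_mx X Z :
  Z *m wedge_mx X Z = pairZX R p q Z X *: Z - innerW R p q Z Z *: (X^T *m I).
Proof.
rewrite /wedge_mx mulmxBr (mulmxA Z X) (pairZX_mx Z X) mul_scalar_mx.
by rewrite (mulmxA Z (I *m Z^T)) innerW_mx mul_scalar_mx.
Qed.

Lemma br_neg_br_neg_pos X Z :
  br (gneg R p q X) (br (gneg R p q X) (gpos R p q Z)) =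
  gneg R p q (innerV R p q X X *: (I *m Z^T) - (2 * pairZX R p q Z X) *: X).
Proof.
rewrite br_neg_pos brC (br_gzero_neg _ _ _ (so_wedge_mx X Z)) oppr_gneg.
rewrite wedge_mx_X scaleNr opprK mulr_natl mulr2n scalerDl !opprD opprK addrA.
by rewrite [_ + _ *: (I *m _)]addrC.
Qed.

Lemma br_br_pos_neg_pos X Z :
  br (br (gpos R p q Z) (gneg R p q X)) (gpos R p q Z) =
  gpos R p q ((2 * pairZX R p q Z X) *: Z - innerW R p q Z Z *: (X^T *m I)).
Proof.
rewrite br_pos_neg (br_gzero_pos _ _ _ (so_pqN _ (so_wedge_mx X Z))).
by rewrite mulmxN Z_wedge_mx opprK mulr_natl mulr2n scalerDl addrA.
Qed.

Lemma gzero_eq0 a A : gzero R p q a A = 0 -> a = 0 /\ A = 0.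
Proof.
rewrite gzero_block3 -block3_mx0 => /eq_block3_mx [ha _ _ _ [hA _ _ _ _]].
by split => //; move/matrixP/(_ 0 0): ha; rewrite !mxE.
Qed.

Lemma gzero_grading_element :
  is_grading_element R p q (gzero R p q 1 0).
Proof.
split.
- by exists 1, 0, 0, 0; split; first exact: so_pq0.
- move=> X; rewrite (br_gzero_neg _ _ _ so_pq0) mul0mx scale1r sub0r.
  by rewrite oppr_gneg.
- by move=> a A _; rewrite br_gzero_scalar.
- by move=> Z; rewrite (br_gzero_pos _ _ _ so_pq0) mulmx0 scale1r subr0.
Qed.

Lemma actV_gzero a A X : so_pq R p q A ->
  actV R p q (gzero R p q a A) X = A *m X - a *: X.
Proof. by move=> soA; rewrite /actV br_gzero_neg // gnegK. Qed.

Lemma actV_gzero_scalar a X : actV R p q (gzero R p q a 0) X = (- a) *: X.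
Proof. by rewrite (actV_gzero _ _ _ so_pq0) mul0mx sub0r scaleNr. Qed.

Lemma actW_gzero a A Z : so_pq R p q A ->
  actW R p q (gzero R p q a A) Z = a *: Z - Z *m A.
Proof. by move=> soA; rewrite /actW br_gzero_pos // gposK. Qed.

Lemma cW_gzero_scalar a i k :
  cW R p q (gzero R p q a 0) i k = a * (i == k)%:R.
Proof.
by rewrite /cW (actW_gzero _ _ _ so_pq0) mulmx0 subr0 !mxE eqxx eq_sym.
Qed.

Lemma rhoV_gzero_scalar a : rhoV R p q (gzero R p q a 0) = (- a)%:M.
Proof.
apply/matrixP => i j; rewrite mxE (actV_gzero _ _ _ so_pq0) mul0mx sub0r !mxE.
by rewrite eqxx andbT mulr_natr mulNrn.
Qed.

Lemma act4_gzero_scalar a t : act4 R p q (gzero R p q a 0) t = (a *+ 2) *: t.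
Proof.
apply/ffunP => -[k l]; rewrite !ffunE /=.
under eq_bigr do rewrite cW_gzero_scalar.
under [X in _ + X + _]eq_bigr do rewrite cW_gzero_scalar.
rewrite !sum_scale_delta rhoV_gzero_scalar mul_scalar_mx mul_mx_scalar subrr.
by rewrite addr0 mulr2n scalerDl.
Qed.

Lemma act3_gzero_scalar a t : act3 R p q (gzero R p q a 0) t = (a *+ 3) *: t.
Proof.
apply/ffunP => -[[k l] m]; rewrite !ffunE /=.
under eq_bigr do rewrite cW_gzero_scalar.
under [X in _ + X + _]eq_bigr do rewrite cW_gzero_scalar.
under [X in _ + X]eq_bigr do rewrite cW_gzero_scalar.
by rewrite !sum_mul_delta -!mulrDl -mulr2n -mulrSr.
Qed.

Section Centre.
Variable Z : 'rV[R]_n.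
Hypothesis hk : innerW R p q Z Z != 0.
Local Notation k := (innerW R p q Z Z).

Lemma Cset_eq0 X : Cset R p q Z X <-> X = 0.
Proof.
split => [|->]; last by rewrite /Cset gneg0 br0l.
rewrite /Cset br_neg_pos => /gzero_eq0 [/eqP]; rewrite oppr_eq0 => /eqP hs hW.
have := congr1 (mulmx^~ (I *m Z^T)) hW.
rewrite /= wedge_mx_IZ mul0mx hs scale0r subr0 => /eqP.
by rewrite scaler_eq0 (negbTE hk) => /eqP.
Qed.

Lemma Fset_iff X :
  Fset R p q Z X <-> pairZX R p q Z X = 0 /\ innerV R p q X X = 0.
Proof.
rewrite /Fset br_neg_br_neg_pos -gneg0.
split => [/gneg_inj hY | [-> ->]]; last by rewrite mulr0 !scale0r subrr.
have e1 := congr1 (fun Y => (Z *m Y) 0 0) hY.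
have e2 := congr1 (fun Y => (X^T *m I *m Y) 0 0) hY.
move: e1 e2; rewrite /= !mulmxBr -!scalemxAr innerW_mx (pairZX_mx Z X).
rewrite pairZX_tr innerV_mx !mulmx0 !mxE eqxx !mulr1n.
set s := pairZX R p q Z X; set r := innerV R p q X X => e1 e2.
have rs0 : r * s = 0.
  by transitivity (- (r * s - 2 * s * r)); [ring | rewrite e2 oppr0].
have two_neq0 : (2 : R) != 0 by rewrite pnatr_eq0.
have s0 : s = 0.
  move/eqP: rs0; rewrite mulf_eq0 => /orP [/eqP r0 | /eqP //].
  move: e1; rewrite r0 mul0r sub0r -mulrA => /eqP.
  by rewrite oppr_eq0 mulf_eq0 (negbTE two_neq0) mulf_eq0 orbb => /eqP.
split => //; move: e1; rewrite s0 mulr0 subr0 => /eqP.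
by rewrite mulf_eq0 (negbTE hk) orbF => /eqP.
Qed.

Lemma br_pos_neg_Tset_elt :
  br (gpos R p q Z) (gneg R p q ((2 / k) *: (I *m Z^T))) = gzero R p q 2 0.
Proof.
set X := (2 / k) *: _.
have hs : pairZX R p q Z X = 2.
  by rewrite /pairZX -scalemxAr innerW_mx !mxE eqxx mulr1n divfK.
have hW : wedge_mx X Z = 0.
  rewrite /wedge_mx linearZ /= trmx_mul trmxK trmx_Ib -!scalemxAl.
  by rewrite -(mulmxA Z I I) mulmx_IbIb mulmx1 -scalemxAr subrr.
by rewrite br_pos_neg hs hW oppr0.
Qed.

Lemma Tset_iff X : Tset R p q Z X <-> X = (2 / k) *: (I *m Z^T).
Proof.
split => [[_] | ->]; last first.
  rewrite /Tset br_pos_neg_Tset_elt (br_gzero_neg _ _ _ so_pq0).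
  rewrite (br_gzero_pos _ _ _ so_pq0) mul0mx sub0r mulmx0 subr0.
  by rewrite scale_gneg scale_gpos oppr_gneg.
rewrite br_br_pos_neg_pos scale_gpos => /gpos_inj hrow.
have := congr1 (fun Y => (Y *m (I *m Z^T)) 0 0) hrow.
rewrite /= !mulmxBl -!scalemxAl innerW_mx pairZX_tr !mxE eqxx !mulr1n.
set s := pairZX R p q Z X in hrow * => e.
have s2 : s = 2.
  have : (s - 2) * k = 0.
    by transitivity (2 * s * k - k * s - 2 * k); [ring | rewrite e subrr].
  by move/eqP; rewrite mulf_eq0 (negbTE hk) orbF subr_eq0 => /eqP.
have hkX : k *: (X^T *m I) = 2 *: Z.
  move: hrow; rewrite s2 => /eqP.
  rewrite subr_eq addrC -subr_eq -scalerBl eq_sym => /eqP ->.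
  by congr (_ *: Z); ring.
have := congr1 (fun Y => k^-1 *: (I *m Y^T)) hkX.
rewrite /= !linearZ /= !scalerA mulfV // scale1r.
by rewrite trmx_mul trmx_Ib trmxK mulmxA mulmx_IbIb mul1mx mulrC => ->.
Qed.

Lemma br_pos_neg_Tset X :
  Tset R p q Z X -> br (gpos R p q Z) (gneg R p q X) = gzero R p q 2 0.
Proof. by move/Tset_iff ->; exact: br_pos_neg_Tset_elt. Qed.

Lemma Tset_positive_action (V : lmodType R)
    (act : 'M[R]_(1 + n + 1) -> V -> V) (W : V -> Prop) (c : R) :
  0 < c -> (forall v, act (gzero R p q 2 0) v = c *: v) ->
  (forall X, Tset R p q Z X ->
     let A := br (gpos R p q Z) (gneg R p q X) in
     diagonalizable_on W (act A) /\ (forall w, W_ss W (act A) w <-> w = 0)) /\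
  (forall w, (forall X, Tset R p q Z X ->
                W_st W (act (br (gpos R p q Z) (gneg R p q X))) w) <-> w = 0).
Proof.
move=> c_gt0 hact; split.
  move=> X /br_pos_neg_Tset /= ->.
  split; first exact: scalar_diagonalizable hact.
  move=> w; split => [|->]; last exact: eigen_sum0.
  by apply: eigen_sum_scalar_eq0 hact; rewrite -leNgt ltW.
have TX : Tset R p q Z ((2 / k) *: (I *m Z^T)) by apply/Tset_iff.
move=> w; split => [/(_ _ TX) | -> X _]; last exact: eigen_sum0.
by rewrite br_pos_neg_Tset //; apply: eigen_sum_scalar_eq0 hact; rewrite -ltNge.
Qed.
End Centre.

End Grading.

Theorem lemma3p4 (R : realFieldType) (p q : nat) (Z : 'rV[R]_(p + q)) :
  (3 <= p + q)%N -> innerW R p q Z Z != 0 ->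
  [/\
   [/\ (forall X, Cset R p q Z X <-> X = 0),
    (forall X, Cset R p q Z X -> Fset R p q Z X),
    (forall X, Fset R p q Z X <-> pairZX R p q Z X = 0 /\ innerV R p q X X = 0)
    & forall X, Tset R p q Z X <->
              X = (2 / innerW R p q Z Z) *: (Ib R p q *m Z^T)],
   (forall X, Tset R p q Z X ->
      let A := br (gpos R p q Z) (gneg R p q X) in
      [/\ is_grading_element R p q (2^-1 *: A),
          diagonalizable_on (fun _ => True) (actV R p q A),
          (forall (l : R) (v : 'cV[R]_(p + q)),
              v != 0 -> actV R p q A v = l *: v -> l <= 0) &
          (forall v, actV R p q A v = 0 <-> Cset R p q Z v)]),
   ((4 <= p + q)%N ->
    forall W : tens4 R (p + q) -> Prop,
      harmonic_component p q (act4 R p q) (weyl_tensor R p q) W ->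
      (forall X, Tset R p q Z X ->
         let A := br (gpos R p q Z) (gneg R p q X) in
         diagonalizable_on W (act4 R p q A) /\
         (forall w, W_ss W (act4 R p q A) w <-> w = 0)) /\
      (forall w, (forall X, Tset R p q Z X ->
                   W_st W (act4 R p q (br (gpos R p q Z) (gneg R p q X))) w)
                 <-> w = 0)) &
   (p + q = 3)%N ->
    forall W : tens3 R (p + q) -> Prop,
      harmonic_component p q (act3 R p q) (cy_tensor R p q) W ->
      (forall X, Tset R p q Z X ->
         let A := br (gpos R p q Z) (gneg R p q X) in
         diagonalizable_on W (act3 R p q A) /\
         (forall w, W_ss W (act3 R p q A) w <-> w = 0)) /\
      (forall w, (forall X, Tset R p q Z X ->
                   W_st W (act3 R p q (br (gpos R p q Z) (gneg R p q X))) w)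
                 <-> w = 0)].
Proof.
move=> _ hk; have two_gt0 : (0 : R) < 2 by rewrite ltr0n.
split.
- split; [exact: Cset_eq0 | | exact: Fset_iff | exact: Tset_iff].
  by move=> X hC; rewrite /Fset hC br0r.
- move=> X /(br_pos_neg_Tset _ _ _ _ hk) /= ->; split.
  + rewrite scale_gzero mulVf ?pnatr_eq0 // scaler0.
    exact: gzero_grading_element.
  + exact: scalar_diagonalizable (actV_gzero_scalar _ _ _ _).
  + move=> l v v_neq0; rewrite actV_gzero_scalar => /eqP.
    rewrite -subr_eq0 -scalerBl scaler_eq0 (negbTE v_neq0) orbF subr_eq0.
    by move=> /eqP <-; rewrite oppr_le0 ltW.
  + move=> v; rewrite actV_gzero_scalar (Cset_eq0 _ _ _ _ hk).
    split => [/eqP | ->]; last by rewrite scaler0.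
    by rewrite scaler_eq0 oppr_eq0 pnatr_eq0 => /eqP.
- move=> _ W _; apply: (Tset_positive_action _ _ _ _ hk _ _ _ (2 *+ 2)).
    by rewrite pmulrn_lgt0.
  exact: act4_gzero_scalar.
- move=> _ W _; apply: (Tset_positive_action _ _ _ _ hk _ _ _ (2 *+ 3)).
    by rewrite pmulrn_lgt0.
  exact: act3_gzero_scalar.
Qed.
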